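(* Let $\mathbf{L}\in\{\mathbf{K}_D,\mathbf{KD}_D,\mathbf{KT}_D\}$. If $\mathsf{G}(\mathbf{L})\vdash\Gamma\Rightarrow\Delta$, then $\mathsf{H}(\mathbf{L})\vdash\Gamma_\star\rightarrow\Delta^\star$, where $\Gamma_\star$ is the conjunction of all formulas in $\Gamma$ ($\top$ if $\Gamma$ is empty) and $\Delta^\star$ is the disjunction of all formulas in $\Delta$ ($\bot$ if $\Delta$ is empty).
   Context: Language: fix a finite nonempty set $\mathsf{Agt}$ of agents and a countable set $\mathsf{Prop}$ of propositional variables; $\mathsf{Grp}$ is the set of nonempty subsets of $\mathsf{Agt}$. Formulas: $\alpha::=p\mid\bot\mid\alpha\wedge\alpha\mid\alpha\vee\alpha\mid\alpha\rightarrow\alpha\mid\neg\alpha\mid D_G\alpha$ ($p\in\mathsf{Prop}$, $G\in\mathsf{Grp}$). Outmost-boxed formula: one of the form $D_G\gamma$. Hilbert systems: $\mathsf{H}(\mathbf{K}_D)$ has all instances of propositional tautologies, $D_G(\alpha\rightarrow\beta)\rightarrow(D_G\alpha\rightarrow D_G\beta)$, $D_G\alpha\rightarrow D_H\alpha$ for $G\subseteq H$, modus ponens, and necessitation (from $\alpha$ infer $D_G\alpha$). $\mathsf{H}(\mathbf{KD}_D)$ adds $\neg D_{\{a\}}\bot$ for each $a\in\mathsf{Agt}$; $\mathsf{H}(\mathbf{KT}_D)$ adds $D_G\alpha\rightarrow\alpha$. Sequent calculi (sequents $\Gamma\Rightarrow\Delta$ are pairs of finite multisets; derivable = root of a finite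 tree built from initial sequents by rules): $\mathsf{G}(\mathbf{K}_D)$ has initial sequents $\Gamma,p\Rightarrow p,\Delta$ and $\bot,\Gamma\Rightarrow\Delta$; rules $(R\wedge)$ from $\Gamma\Rightarrow\Delta,\alpha_1$ and $\Gamma\Rightarrow\Delta,\alpha_2$ infer $\Gamma\Rightarrow\Delta,\alpha_1\wedge\alpha_2$; $(L\wedge)$ from $\alpha_1,\alpha_2,\Gamma\Rightarrow\Delta$ infer $\alpha_1\wedge\alpha_2,\Gamma\Rightarrow\Delta$; $(R\vee)$ from $\Gamma\Rightarrow\Delta,\alpha_1,\alpha_2$ infer $\Gamma\Rightarrow\Delta,\alpha_1\vee\alpha_2$; $(L\vee)$ from $\alpha_1,\Gamma\Rightarrow\Delta$ and $\alpha_2,\Gamma\Rightarrow\Delta$ infer $\alpha_1\vee\alpha_2,\Gamma\Rightarrow\Delta$; $(R\rightarrow)$ from $\alpha_1,\Gamma\Rightarrow\Delta,\alpha_2$ infer $\Gamma\Rightarrow\Delta,\alpha_1\rightarrow\alpha_2$; $(L\rightarrow)$ from $\Gamma\Rightarrow\Delta,\alpha_1$ and $\alpha_2,\Gamma\Rightarrow\Delta$ infer $\alpha_1\rightarrow\alpha_2,\Gamma\Rightarrow\Delta$; $(R\neg)$ from $\alpha,\Gamma\Rightarrow\Delta$ infer $\Gamma\Rightarrow\Delta,\neg\alpha$; $(L\neg)$ from $\Gamma\Rightarrow\Delta,\alpha$ infer $\neg\alpha,\Gamma\Rightarrow\Delta$; $(D_K)$: from $\alpha_1,\dots,\alpha_n\Rightarrow\beta$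 ($n\ge0$) infer $\Sigma,D_{G_1}\alpha_1,\dots,D_{G_n}\alpha_n\Rightarrow D_G\beta,\Omega$ where all $G_i\subseteq G$, $\Sigma$ consists only of propositional variables, $\bot$, and $D_H\gamma$ with $H\not\subseteq G$, and $\Omega$ only of propositional variables, $\bot$, outmost-boxed formulas. $\mathsf{G}(\mathbf{KD}_D)$ adds $(D_D)$: from $\Gamma\Rightarrow$ with $\Gamma\neq\emptyset$ infer $\Sigma,D_{\{a\}}\Gamma\Rightarrow\Omega$, $\Sigma$ only propositional variables, $\bot$, $D_H\gamma$ with $H\neq\{a\}$; $\Omega$ only propositional variables, $\bot$, outmost-boxed formulas. $\mathsf{G}(\mathbf{KT}_D)$ adds to $\mathsf{G}(\mathbf{K}_D)$ $(D_T)$: from $D_G\alpha,\alpha,\Gamma\Rightarrow\Delta$ infer $D_G\alpha,\Gamma\Rightarrow\Delta$. *)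

From mathcomp Require Import all_boot.
From Stdlib Require Import Permutation.
Set Implicit Arguments. Unset Strict Implicit. Unset Printing Implicit Defensive.

Section Syntax.
Variable A : finType. (* the finite set Agt of agents *)

Definition grp := {G : {set A} | G != set0}.

Inductive form : Type :=
| Var of nat
| Bot
| And of form & form
| Or of form & form
| Imp of form & form
| Neg of form
| Box of grp & form.

Definition Top : form := Imp Bot Bot.

Lemma set1_nonempty (a : A) : [set a] != set0.
Proof. by apply/set0Pn; exists a; rewrite in_set1. Qed.

Definition gsing (a : A) : grp := exist _ [set a] (set1_nonempty a).

Fixpoint peval (v : form -> bool) (f : form) : bool :=
  match f with
  | Var p => v (Var p)
  | Bot => false
  | And f1 f2 => peval v f1 && peval v f2
  | Or f1 f2 => peval v f1 || peval v f2
  | Imp f1 f2 => peval v f1 ==> peval v f2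
  | Neg f1 => ~~ peval v f1
  | Box G g => v (Box G g)
  end.

Definition taut_instance (f : form) : Prop := forall v : form -> bool, peval v f.

Inductive logic := LK | LKD | LKT.

Inductive Hprov (L : logic) : form -> Prop :=
| H_taut a : taut_instance a -> Hprov L a
| H_K (G : grp) a b :
    Hprov L (Imp (Box G (Imp a b)) (Imp (Box G a) (Box G b)))
| H_mono (G H : grp) a : val G \subset val H ->
    Hprov L (Imp (Box G a) (Box H a))
| H_D (a : A) : L = LKD -> Hprov L (Neg (Box (gsing a) Bot))
| H_T (G : grp) a : L = LKT -> Hprov L (Imp (Box G a) a)
| H_MP a b : Hprov L (Imp a b) -> Hprov L a -> Hprov L b
| H_Nec (G : grp) a : Hprov L a -> Hprov L (Box G a).

Definition omega_ok (f : form) : Prop :=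
  match f with Var _ | Bot | Box _ _ => True | _ => False end.

Definition sigmaK_ok (G : grp) (f : form) : Prop :=
  match f with Var _ | Bot => True | Box H _ => ~ (val H \subset val G) | _ => False end.

Definition sigmaD_ok (a : A) (f : form) : Prop :=
  match f with Var _ | Bot => True | Box H _ => val H <> [set a] | _ => False end.

(* Sequent calculi G(K_D), G(KD_D), G(KT_D).  Sequents are pairs of finite
   multisets, represented as lists taken up to permutation (rule G_perm). *)
Inductive Gprov (L : logic) : seq form -> seq form -> Prop :=
| G_perm Г Δ Г' Δ' : Permutation Г Г' -> Permutation Δ Δ' ->
    Gprov L Г Δ -> Gprov L Г' Δ'
| G_init Г Δ p : Gprov L (Var p :: Г) (Var p :: Δ)
| G_bot Г Δ : Gprov L (Bot :: Г) Δ
| G_Rand Г Δ a1 a2 : Gprov L Г (a1 :: Δ) -> Gprov L Г (a2 :: Δ) ->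
    Gprov L Г (And a1 a2 :: Δ)
| G_Land Г Δ a1 a2 : Gprov L (a1 :: a2 :: Г) Δ -> Gprov L (And a1 a2 :: Г) Δ
| G_Ror Г Δ a1 a2 : Gprov L Г (a1 :: a2 :: Δ) -> Gprov L Г (Or a1 a2 :: Δ)
| G_Lor Г Δ a1 a2 : Gprov L (a1 :: Г) Δ -> Gprov L (a2 :: Г) Δ ->
    Gprov L (Or a1 a2 :: Г) Δ
| G_Rimp Г Δ a1 a2 : Gprov L (a1 :: Г) (a2 :: Δ) -> Gprov L Г (Imp a1 a2 :: Δ)
| G_Limp Г Δ a1 a2 : Gprov L Г (a1 :: Δ) -> Gprov L (a2 :: Г) Δ ->
    Gprov L (Imp a1 a2 :: Г) Δ
| G_Rneg Г Δ a : Gprov L (a :: Г) Δ -> Gprov L Г (Neg a :: Δ)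
| G_Lneg Г Δ a : Gprov L Г (a :: Δ) -> Gprov L (Neg a :: Г) Δ
| G_DK (boxes : seq (grp * form)) (G : grp) b (Σ Ω : seq form) :
    (forall p, List.In p boxes -> val p.1 \subset val G) ->
    (forall f, List.In f Σ -> sigmaK_ok G f) ->
    (forall f, List.In f Ω -> omega_ok f) ->
    Gprov L (map snd boxes) [:: b] ->
    Gprov L (Σ ++ map (fun p => Box p.1 p.2) boxes) (Box G b :: Ω)
| G_DD (a : A) (Г Σ Ω : seq form) : L = LKD -> Г <> [::] ->
    (forall f, List.In f Σ -> sigmaD_ok a f) ->
    (forall f, List.In f Ω -> omega_ok f) ->
    Gprov L Г [::] ->
    Gprov L (Σ ++ map (Box (gsing a)) Г) Ω
| G_DT (G : grp) a Г Δ : L = LKT ->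
    Gprov L (Box G a :: a :: Г) Δ -> Gprov L (Box G a :: Г) Δ.

Fixpoint bigAnd (l : seq form) : form :=
  match l with
  | [::] => Top
  | [:: a] => a
  | a :: l' => And a (bigAnd l')
  end.

Fixpoint bigOr (l : seq form) : form :=
  match l with
  | [::] => Bot
  | [:: a] => a
  | a :: l' => Or a (bigOr l')
  end.

End Syntax.

Arguments Var {A}.
Arguments Bot {A}.

From mathcomp Require Import all_boot.
From Stdlib Require Import Permutation.
Set Implicit Arguments. Unset Strict Implicit. Unset Printing Implicit Defensive.

(* A valuation that treats propositional variables and outermost-boxed
   formulas as atoms turns the translation [Γ_* -> Δ^*] of a sequent into a
   boolean, and the Hilbert systems prove every tautological consequence of
   their theorems.  Each propositional rule is therefore sound because the
   translation of its conclusion is a tautological consequence of those of its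
   premises.  For (D_K), axiom K, monotonicity and necessitation make
   [D_{G_1} a_1 /\ ... /\ D_{G_n} a_n -> D_G (a_1 /\ ... /\ a_n)] provable, and
   necessitation of the premise gives [D_G (a_1 /\ ... /\ a_n) -> D_G b];
   (D_D) adds the axiom [~ D_{a} bot], and (D_T) the axiom [D_G a -> a]. *)

Lemma Permutation_all (T : Type) (f : pred T) (s1 s2 : seq T) :
  Permutation s1 s2 -> all f s1 = all f s2.
Proof. by elim=> //= [x s s' _ -> | x y s | s s' s'' _ -> _ ->] //; rewrite andbCA. Qed.

Lemma Permutation_has (T : Type) (f : pred T) (s1 s2 : seq T) :
  Permutation s1 s2 -> has f s1 = has f s2.
Proof. by elim=> //= [x s s' _ -> | x y s | s s' s'' _ -> _ ->] //; rewrite orbCA. Qed.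

(* Otherwise [/=] unfolds [bigAnd (a :: s)] into a [match] on [s], which
   [peval_bigAnd] no longer recognises. *)
Arguments bigAnd : simpl never.
Arguments bigOr : simpl never.

Lemma peval_bigAnd (A : finType) v (Г : seq (form A)) :
  peval v (bigAnd Г) = all (peval v) Г.
Proof.
elim: Г => // a [|b Г] IH; first by rewrite /bigAnd /= andbT.
by rewrite -[bigAnd _]/(And a (bigAnd (b :: Г))) /= IH.
Qed.

Lemma peval_bigOr (A : finType) v (Δ : seq (form A)) :
  peval v (bigOr Δ) = has (peval v) Δ.
Proof.
elim: Δ => // a [|b Δ] IH; first by rewrite /bigOr /= orbF.
by rewrite -[bigOr _]/(Or a (bigOr (b :: Δ))) /= IH.
Qed.

(* Once [peval] is unfolded, the goal is a boolean combination of atoms and of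
   [all]/[has] over opaque lists, so case analysis on these is a truth table. *)
Ltac valuation_cases :=
  move=> v /=; rewrite ?peval_bigAnd ?peval_bigOr ?all_cat /=;
  repeat match goal with
  | |- context [peval ?v ?f] => case: (peval v f)
  | |- context [all ?f ?s] => case: (all f s)
  | |- context [has ?f ?s] => case: (has f s)
  | |- context [?v (Var ?p)] => case: (v (Var p))
  | |- context [?v (Box ?G ?f)] => case: (v (Box G f))
  end.

Ltac split_Forall := do ![apply: List.Forall_cons | apply: List.Forall_nil].

Section Soundness.
Variables (A : finType) (L : logic).
Implicit Types (a b : form A) (G : grp A) (Г Δ Σ Ω : seq (form A)).

Definition sequent_form Г Δ : form A := Imp (bigAnd Г) (bigOr Δ).

Lemma Hprov_taut_consequence (ps : seq (form A)) b :
  List.Forall (Hprov L) ps -> (forall v, all (peval v) ps -> peval v b) ->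
  Hprov L b.
Proof.
elim: ps b => [|p ps IH] b hps hb; first by apply: H_taut => v; apply: hb.
inversion_clear hps as [|? ? hp hps'].
apply: (H_MP _ hp); apply: IH => // v /= hv.
by apply/implyP => hpv; apply: hb; rewrite /= hpv.
Qed.

Lemma sequent_rule0 Г Δ :
  (forall v, peval v (sequent_form Г Δ)) -> Hprov L (sequent_form Г Δ).
Proof. exact: H_taut. Qed.

Lemma sequent_rule1 Г1 Δ1 Г Δ :
  Hprov L (sequent_form Г1 Δ1) ->
  (forall v, peval v (sequent_form Г1 Δ1) -> peval v (sequent_form Г Δ)) ->
  Hprov L (sequent_form Г Δ).
Proof.
move=> h1 hs; apply: (@Hprov_taut_consequence [:: sequent_form Г1 Δ1]).
  by split_Forall.
by move=> v /andP[hv _]; apply: hs.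
Qed.

Lemma sequent_rule2 Г1 Δ1 Г2 Δ2 Г Δ :
  Hprov L (sequent_form Г1 Δ1) -> Hprov L (sequent_form Г2 Δ2) ->
  (forall v, peval v (sequent_form Г1 Δ1) -> peval v (sequent_form Г2 Δ2) ->
     peval v (sequent_form Г Δ)) ->
  Hprov L (sequent_form Г Δ).
Proof.
move=> h1 h2 hs.
apply: (@Hprov_taut_consequence [:: sequent_form Г1 Δ1; sequent_form Г2 Δ2]).
  by split_Forall.
by move=> v /and3P[h1v h2v _]; apply: hs.
Qed.

Lemma Hprov_sequent_perm Г Δ Г' Δ' :
  Permutation Г Г' -> Permutation Δ Δ' ->
  Hprov L (sequent_form Г Δ) -> Hprov L (sequent_form Г' Δ').
Proof.
move=> pГ pΔ h; apply: (sequent_rule1 h) => v /=.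
by rewrite !peval_bigAnd !peval_bigOr (Permutation_all _ pГ) (Permutation_has _ pΔ).
Qed.

Lemma Hprov_box_imp G a b :
  Hprov L (Imp a b) -> Hprov L (Imp (Box G a) (Box G b)).
Proof. by move=> h; apply: H_MP (H_K _ _ _ _) (H_Nec _ h). Qed.

Lemma Hprov_box_bigAnd G (boxes : seq (grp A * form A)) :
  (forall p, List.In p boxes -> val p.1 \subset val G) ->
  Hprov L (Imp (bigAnd [seq Box p.1 p.2 | p <- boxes])
               (Box G (bigAnd [seq p.2 | p <- boxes]))).
Proof.
elim: boxes => [|[H a] boxes IH] hsub.
  apply: (@Hprov_taut_consequence [:: Box G (bigAnd [::])]); last by valuation_cases.
  by split_Forall; apply/H_Nec/H_taut.
set C := bigAnd [seq p.2 | p <- boxes].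
apply: (@Hprov_taut_consequence
  [:: Imp (Box H a) (Box G a); Imp (bigAnd [seq Box p.1 p.2 | p <- boxes]) (Box G C);
      Imp (Box G a) (Box G (Imp C (And a C)));
      Imp (Box G (Imp C (And a C))) (Imp (Box G C) (Box G (And a C)));
      Imp (Box G (And a C)) (Box G (bigAnd [seq p.2 | p <- (H, a) :: boxes]))]);
  last by valuation_cases.
split_Forall.
- by apply: H_mono; apply: (hsub (H, a)); left.
- by apply: IH => p hp; apply: hsub; right.
- by apply/Hprov_box_imp/H_taut; valuation_cases.
- exact: H_K.
- by apply/Hprov_box_imp/H_taut; valuation_cases.
Qed.

Lemma Hprov_DK G (boxes : seq (grp A * form A)) b Σ Ω :
  (forall p, List.In p boxes -> val p.1 \subset val G) ->
  Hprov L (sequent_form [seq p.2 | p <- boxes] [:: b]) ->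
  Hprov L (sequent_form (Σ ++ [seq Box p.1 p.2 | p <- boxes]) (Box G b :: Ω)).
Proof.
move=> hsub hb.
have hGb : Hprov L (Imp (Box G (bigAnd [seq p.2 | p <- boxes])) (Box G b)).
  exact: Hprov_box_imp hb.
apply: (@Hprov_taut_consequence
  [:: Imp (bigAnd [seq Box p.1 p.2 | p <- boxes]) (Box G (bigAnd [seq p.2 | p <- boxes]));
      Imp (Box G (bigAnd [seq p.2 | p <- boxes])) (Box G b)]); last by valuation_cases.
by split_Forall => //; apply: Hprov_box_bigAnd.
Qed.

Lemma Hprov_DD (a : A) Г Σ Ω : L = LKD ->
  Hprov L (sequent_form Г [::]) ->
  Hprov L (sequent_form (Σ ++ [seq Box (gsing a) f | f <- Г]) Ω).
Proof.
move=> hL hГ.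
have hbox : Hprov L (Imp (bigAnd [seq Box (gsing a) f | f <- Г])
                         (Box (gsing a) (bigAnd Г))).
  have := @Hprov_box_bigAnd (gsing a) [seq (gsing a, f) | f <- Г].
  rewrite -!map_comp map_id; apply=> p /List.in_map_iff[f [<- _]]; exact: subxx.
have hbot : Hprov L (Imp (Box (gsing a) (bigAnd Г)) (Box (gsing a) Bot)).
  exact: Hprov_box_imp hГ.
apply: (@Hprov_taut_consequence
  [:: Imp (bigAnd [seq Box (gsing a) f | f <- Г]) (Box (gsing a) (bigAnd Г));
      Imp (Box (gsing a) (bigAnd Г)) (Box (gsing a) Bot); Neg (Box (gsing a) Bot)]);
  last by valuation_cases.
by split_Forall => //; apply: H_D.
Qed.

Lemma Hprov_DT G a Г Δ : L = LKT ->
  Hprov L (sequent_form (Box G a :: a :: Г) Δ) ->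
  Hprov L (sequent_form (Box G a :: Г) Δ).
Proof.
move=> hL h.
apply: (@Hprov_taut_consequence [:: sequent_form (Box G a :: a :: Г) Δ; Imp (Box G a) a]);
  last by valuation_cases.
by split_Forall => //; apply: H_T.
Qed.

End Soundness.

Theorem proposition3p13 (A : finType) (HA : 0 < #|A|) (L : logic)
    (Г Δ : seq (form A)) :
  Gprov L Г Δ -> Hprov L (Imp (bigAnd Г) (bigOr Δ)).
Proof.
elim=> {Г Δ}.
- by move=> Г Δ Г' Δ' pГ pΔ _; apply: Hprov_sequent_perm.
- by move=> Г Δ p; apply: sequent_rule0; valuation_cases.
- by move=> Г Δ; apply: sequent_rule0; valuation_cases.
- by move=> Г Δ a1 a2 _ h1 _ h2; apply: (sequent_rule2 h1 h2); valuation_cases.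
- by move=> Г Δ a1 a2 _ h; apply: (sequent_rule1 h); valuation_cases.
- by move=> Г Δ a1 a2 _ h; apply: (sequent_rule1 h); valuation_cases.
- by move=> Г Δ a1 a2 _ h1 _ h2; apply: (sequent_rule2 h1 h2); valuation_cases.
- by move=> Г Δ a1 a2 _ h; apply: (sequent_rule1 h); valuation_cases.
- by move=> Г Δ a1 a2 _ h1 _ h2; apply: (sequent_rule2 h1 h2); valuation_cases.
- by move=> Г Δ a _ h; apply: (sequent_rule1 h); valuation_cases.
- by move=> Г Δ a _ h; apply: (sequent_rule1 h); valuation_cases.
- by move=> boxes G b Σ Ω hsub _ _ _; apply: Hprov_DK.
- by move=> a Г Σ Ω hL _ _ _ _; apply: Hprov_DD.
- by move=> G a Г Δ hL _; apply: Hprov_DT.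
Qed.
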